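(* Let $q=2$ and let $n,d$ be integers with $d\ge1$ and $n\ge 2d+1$. For all $0\le i\le d-1$ and $1\le j\le d$, $$|G_j(i+1)|<|G_j(i)|.$$
   Context: With $q=2$, for integers $m\ge 0$ and $l$, ${m\brack l}=\prod_{t=1}^{l}\frac{q^{m-t+1}-1}{q^t-1}$ for $l\ge0$ and $0$ for $l<0$. For $0\le i,j\le d$, $$G_j(i)=\sum_{h=\max\{0,i-j\}}^{\min\{i,d-j\}}(-1)^{i-h}q^{j(j-i+h)+\binom{i-h}{2}}{i\brack h}{d-h\brack j}{n-d-i+h\brack n-d-j};$$ these are the eigenvalues of the Grassmann graph $G_q(n,d,j)$ (vertices: $d$-subspaces of $\mathbb F_q^n$, adjacent iff intersection has dimension $d-j$). *)

From mathcomp Require Import all_boot all_order all_algebra.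
Set Implicit Arguments. Unset Strict Implicit. Unset Printing Implicit Defensive.
Import Order.TTheory GRing.Theory Num.Theory.
Local Open Scope ring_scope.

Definition q : nat := 2.

(* Gaussian binomial [m brack l] for l >= 0 (as a rational number; it is an
   integer). The case l < 0 never arises below since indices are nats. *)
Definition gbin (m l : nat) : rat :=
  \prod_(1 <= t < l.+1) (((q ^ (m - t + 1))%:R - 1) / ((q ^ t)%:R - 1)).

(* G_j(i) for the Grassmann graph G_q(n,d,j), q = 2.
   Summation over h from max(0,i-j) to min(i,d-j) (inclusive).
   All nat subtractions below are non-negative on this range when n >= 2d+1:
   j - i + h >= 0, i - h >= 0, d - h >= 0, n - d - i + h >= 0, n - d - j >= 0. *)
Definition G (n d j i : nat) : rat :=
  \sum_(maxn 0 (i - j) <= h < (minn i (d - j)).+1)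
    (-1) ^+ (i - h) * (q ^ (j * (j + h - i) + 'C(i - h, 2)))%:R
      * gbin i h * gbin (d - h) j * gbin (n - d - i + h) (n - d - j).

(* Write G_j(i) = sum_{h = lo..top} (-1)^(i-h) T_i(h) with positive summands
   T_i(h) = term n d j i h, lo = max(0, i-j) and top = min(i, d-j).
   1. The ratio T_i(h+1) / T_i(h) is an explicit quotient of factors 2^a - 1
      (from the recurrences of the Gaussian binomials), and it is >= 1 on the
      summation range: the summands increase.
   2. An alternating sum of nonnegative increasing terms ending with a + sign
      lies between f(top) - f(top-1) and f(top).  Hence
      |G_j(i+1)| <= T_{i+1}(top') and |G_j(i)| >= T_i(top) - T_i(top-1).
   3. It remains to show T_{i+1}(top') + T_i(top-1) < T_i(top).  Both terms on
      the left are expressed as explicit multiples of T_i(top), and elementary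
      real inequalities between powers of two bound the multipliers; the cases
      i + j < d (top = i) and i + j >= d (top = d - j) are treated separately. *)

From mathcomp Require Import all_boot all_order all_algebra ring lra zify.
Import Order.TTheory GRing.Theory Num.Theory.
Local Open Scope ring_scope.

Local Notation pow2 k := ((q ^ k)%:R : rat).

Lemma pow2D a b : pow2 (a + b) = pow2 a * pow2 b.
Proof. by rewrite expnD natrM. Qed.

Lemma pow2_0 : pow2 0 = 1. Proof. by []. Qed.
Lemma pow2_1 : pow2 1 = 2. Proof. by []. Qed.

Lemma pow2S a : pow2 a.+1 = 2 * pow2 a.
Proof. by rewrite -addn1 pow2D mulrC. Qed.

Lemma pow2_gt0 a : 0 < pow2 a.
Proof. by rewrite ltr0n expn_gt0. Qed.

Lemma pow2_ge1 a : 1 <= pow2 a.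
Proof. by rewrite ler1n expn_gt0. Qed.

Lemma pow2_le a b : (a <= b)%N -> pow2 a <= pow2 b.
Proof. by move=> le_ab; rewrite ler_nat leq_pexp2l. Qed.

Lemma pow2_ge2 a : (0 < a)%N -> 2 <= pow2 a.
Proof. exact: (@pow2_le 1). Qed.

Lemma pow2B1_gt0 a : (0 < a)%N -> 0 < pow2 a - 1.
Proof. by move=> /pow2_ge2 ge2; rewrite subr_gt0 (lt_le_trans _ ge2) ?ltr1n. Qed.

Lemma gbin0 m : gbin m 0 = 1.
Proof. by rewrite /gbin big_geq. Qed.

Lemma gbin_gt0 m l : 0 < gbin m l.
Proof.
rewrite /gbin big_nat_cond; apply: prodr_gt0 => t /andP[/andP[t_gt0 _] _].
by rewrite divr_gt0 // pow2B1_gt0 //; lia.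
Qed.

Lemma gbinSr m l : (l < m)%N ->
  gbin m l.+1 * (pow2 l.+1 - 1) = gbin m l * (pow2 (m - l) - 1).
Proof.
move=> lt_lm; rewrite /gbin big_nat_recr //= -/(gbin m l).
rewrite (_ : (m - l.+1 + 1 = m - l)%N); last lia.
by rewrite -mulrA mulfVK // lt0r_neq0 // pow2B1_gt0.
Qed.

Lemma gbinSl m l : (l <= m)%N ->
  gbin m.+1 l * (pow2 (m.+1 - l) - 1) = gbin m l * (pow2 m.+1 - 1).
Proof.
elim: l => [|l IH] le_lm; first by rewrite !gbin0 subn0.
have nz : pow2 l.+1 - 1 != 0 by rewrite lt0r_neq0 // pow2B1_gt0.
apply: (mulIf nz).
have Sr1 := @gbinSr m.+1 l ltac:(lia).
have Sr2 := @gbinSr m l le_lm.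
rewrite (_ : (m.+1 - l.+1 = m - l)%N); last lia.
transitivity (gbin m.+1 l.+1 * (pow2 l.+1 - 1) * (pow2 (m - l) - 1)); first ring.
rewrite Sr1 (IH ltac:(lia)).
transitivity (gbin m l.+1 * (pow2 l.+1 - 1) * (pow2 m.+1 - 1)); last ring.
by rewrite Sr2; ring.
Qed.

Lemma gbinnn m : gbin m m = 1.
Proof.
elim: m => [|m IH]; first exact: gbin0.
have nz : pow2 m.+1 - 1 != 0 by rewrite lt0r_neq0 // pow2B1_gt0.
apply: (mulIf nz); rewrite mul1r gbinSr // subSnn.
by have := @gbinSl m m (leqnn m); rewrite subSnn IH mul1r.
Qed.

(* The inequality behind the monotonicity of the summands, in the variables
   C = 2^c, S = 2^s, W = 2^w, H = 2^h of term_mono: the denominator of the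
   ratio T(h+1) / T(h) is at most its numerator. *)
Lemma step_ratio_ineq {R : realDomainType} (C S W H N : R) :
  1 <= C -> 2 <= S -> 2 <= W -> 1 <= H -> 2 * S * W * H <= N ->
  C * (2 * H - 1) * (W * S * C - 1) * (S - 1) <= S * C * (2 * C - 1) * (W - 1) * (N - 1).
Proof.
move=> C_ge1 S_ge2 W_ge2 H_ge1 N_ge.
have HS_bound : 2 * ((2 * H - 1) * (S - 1)) <= 4 * S * H - 1 by nra.
have N_bound : 4 * S * H - 1 <= N - 1.
  have : 0 <= S * H * (W - 2) by rewrite !mulr_ge0 //; lra.
  nra.
rewrite -(ler_pM2l (_ : 0 < 2)) //.
apply: (@le_trans _ _ (S * C * C * W * (4 * S * H - 1))).
  rewrite [leLHS](_ : _ = C * (W * S * C - 1) * (2 * ((2 * H - 1) * (S - 1)))); last ring.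
  rewrite [leRHS](_ : _ = C * (W * S * C) * (4 * S * H - 1)); last ring.
  have WSC_ge1 : 1 <= W * S * C by rewrite !mulr_ege1 //; lra.
  apply: ler_pM => //; [|nra| by rewrite ler_wpM2l ?gerBl //; lra].
  by rewrite mulr_ge0 ?subr_ge0 //; lra.
have CW_bound : C * W <= (2 * C - 1) * (2 * (W - 1)) by nra.
rewrite [leRHS](_ : _ = S * C * ((2 * C - 1) * (2 * (W - 1))) * (N - 1)); last ring.
rewrite [leLHS](_ : _ = S * C * (C * W) * (4 * S * H - 1)); last ring.
apply: ler_pM; [by rewrite !mulr_ge0 //; lra | nra | | exact: N_bound].
by rewrite ler_wpM2l // mulr_ge0 //; lra.
Qed.

(* Case i + j < d, with J = 2^j and A = 2^(d-i-j): the multiplier (A - 1) / (AJ - 1)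
   relating the two top summands is less than 1/2 ... *)
Lemma top_ratio_lt_half {R : realDomainType} (J A : R) :
  2 <= J -> 2 <= A -> 2 * (A - 1) < A * J - 1.
Proof. by move=> J_ge2 A_ge2; nra. Qed.

(* ... and, with I = 2^i and N = 2^(n-d), the multiplier relating the summand
   below the top of G_j(i) to its top summand is at most 1/2. *)
Lemma below_ratio_le_half {R : realDomainType} (I J A N : R) :
  1 <= I -> 2 <= J -> 2 <= A -> 2 * I * J * A <= N ->
  2 * ((I - 1) * (2 * A * J - 1) * (J - 1)) <= J * (2 * A - 1) * (N - 1).
Proof.
move=> I_ge1 J_ge2 A_ge2 N_ge.
have IJ_ge2 : 2 <= I * J by rewrite -[2]mul1r ler_pM //; lra.
have K_ge : 2 * A <= I * J * A by rewrite ler_wpM2r //; lra.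
have K_main : 4 * (I * J * A) <= (2 * A - 1) * (2 * (I * J * A) - 1).
  have : 0 <= (A - 2) * (I * J * A) by rewrite mulr_ge0 //; lra.
  lra.
apply: (@le_trans _ _ (J * (4 * (I * J * A)))).
  rewrite [leRHS](_ : _ = 2 * (I * (2 * A * J) * J)); last ring.
  rewrite ler_wpM2l // ler_pM ?subr_ge0 ?gerBl ?ler_pM ?mulr_ge0 ?subr_ge0 //; nra.
rewrite -[leRHS]mulrA; apply: ler_wpM2l; first lra.
apply: (le_trans K_main); apply: ler_wpM2l; lra.
Qed.

(* Case i + j >= d, with M = 2^(i+j-d), P = 2^(d-j), S = 2^(d-i), N = 2^(n-i-j):
   the two multipliers (over the common denominator S (2M - 1) (N - 1)) add up
   to less than 1.  The slack is an explicit sum of nonnegative terms. *)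
Lemma ratio_sum_lt_one {R : realDomainType} (M P S N : R) :
  1 <= M -> 1 <= P -> 2 <= S -> 2 * P * S <= N ->
  (2 * M * P - 1) * (S - 1) + (P - 1) * (2 * M * S - 1) * (S - 1) < S * (2 * M - 1) * (N - 1).
Proof.
move=> M_ge1 P_ge1 S_ge2 N_ge.
have slack : S * (2 * M - 1) * (2 * P * S - 1)
    - ((2 * M * P - 1) * (S - 1) + (P - 1) * (2 * M * S - 1) * (S - 1))
  = 2 * P * S ^+ 2 * (M - 1) + 2 * M * S * (S - 2) + P * (S - 1) + 2 * M * P + S by ring.
have : 0 < 2 * P * S ^+ 2 * (M - 1) + 2 * M * S * (S - 2) + P * (S - 1) + 2 * M * P + S.
  by rewrite ltr_wpDl ?addr_ge0 ?mulr_ge0 //; lra.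
rewrite -slack subr_gt0 => /lt_le_trans; apply.
by rewrite ler_wpM2l ?lerD2r ?mulr_ge0 //; lra.
Qed.

Lemma lt_of_ratio {R : realDomainType} (X Y D a : R) :
  0 < X -> 0 < D -> Y * D = X * a -> a < D -> Y < X.
Proof. by move=> X_gt0 D_gt0 YD a_lt; rewrite -(ltr_pM2r D_gt0) YD ltr_pM2l. Qed.

Lemma le_of_ratio {R : realDomainType} (X Y D a : R) :
  0 <= X -> 0 < D -> Y * D = X * a -> a <= D -> Y <= X.
Proof. by move=> X_ge0 D_gt0 YD a_le; rewrite -(ler_pM2r D_gt0) YD ler_wpM2l. Qed.

Lemma alternating_sum_bounds {R : numDomainType} (f : nat -> R) lo hi :
  (lo <= hi)%N -> (forall h, 0 <= f h) ->
  (forall h, (lo <= h < hi)%N -> f h <= f h.+1) ->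
  let A := \sum_(lo <= h < hi.+1) (-1) ^+ (hi - h) * f h in
  [/\ 0 <= A, A <= f hi & f hi - (if (lo < hi)%N then f hi.-1 else 0) <= A].
Proof.
move=> le_lohi f_ge0; elim: hi le_lohi => [|hi IH] le_lohi mono /=.
  by move: le_lohi; rewrite leqn0 => /eqP->; rewrite big_nat1 expr0 mul1r subr0 f_ge0.
case: (ltngtP lo hi.+1) le_lohi => // [lt_lohi|<-] _; last first.
  by rewrite big_nat1 subnn expr0 mul1r subr0 f_ge0.
have [A_ge0 A_le _] := IH lt_lohi (fun h hh => mono h ltac:(lia)).
rewrite big_nat_recr /=; last lia.
set A := \sum_(lo <= h < hi.+1) _ in A_ge0 A_le *.
have -> : \sum_(lo <= h < hi.+1) (-1) ^+ (hi.+1 - h) * f h = - A.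
  rewrite /A -sumrN; apply: eq_big_nat => h /andP[_ lt_h].
  by rewrite subSn // exprS mulN1r mulNr.
have f_mono : f hi <= f hi.+1 by apply: mono; lia.
rewrite subnn expr0 mul1r /= addrC; split.
- by rewrite subr_ge0 (le_trans A_le f_mono).
- by rewrite gerDl oppr_le0.
- by rewrite lerD2l lerN2.
Qed.

Definition term n d j i h : rat :=
  (q ^ (j * (j + h - i) + 'C(i - h, 2)))%:R * gbin i h * gbin (d - h) j
    * gbin (n - d - i + h) (n - d - j).

Definition top d j i := minn i (d - j).

Lemma term_gt0 n d j i h : 0 < term n d j i h.
Proof. by rewrite /term !mulr_gt0 ?gbin_gt0 // ltr0n expn_gt0. Qed.

Lemma G_alternating n d j i :
  G n d j i = \sum_(i - j <= h < (top d j i).+1) (-1) ^+ (i - h) * term n d j i h.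
Proof. by rewrite /G max0n; apply: eq_bigr => h _; rewrite /term !mulrA. Qed.

Lemma term_succ_ratio n d j i h :
  (i <= j + h)%N -> (h < i)%N -> (h + j < d)%N -> (i <= n - d)%N -> (j <= n - d)%N ->
  term n d j i h.+1
    * (pow2 (i - h.+1) * (pow2 h.+1 - 1) * (pow2 (d - h) - 1) * (pow2 (j + h.+1 - i) - 1))
  = term n d j i h
    * (pow2 j * (pow2 (i - h) - 1) * (pow2 (d - h - j) - 1) * (pow2 (n - d - i + h.+1) - 1)).
Proof.
move=> le_i lt_hi lt_hjd le_i_nd le_j_nd.
have power : (q ^ (j * (j + h.+1 - i) + 'C(i - h.+1, 2)))%:R * pow2 (i - h.+1)
           = (q ^ (j * (j + h - i) + 'C(i - h, 2)))%:R * pow2 j.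
  rewrite -!natrM -!expnD; congr (_ ^ _)%:R.
  set c := (i - h.+1)%N; set u := (j + h - i)%N.
  rewrite (_ : (i - h = c.+1)%N); last by rewrite /c; lia.
  rewrite (_ : (j + h.+1 - i = u.+1)%N); last by rewrite /u; lia.
  by rewrite binS bin1 mulnS; ring.
have rec1 := @gbinSr i h lt_hi.
have rec2 := @gbinSl (d - h.+1) j ltac:(lia).
rewrite (_ : ((d - h.+1).+1 = d - h)%N) in rec2; last lia.
have rec3 := @gbinSl (n - d - i + h) (n - d - j) ltac:(lia).
rewrite (_ : ((n - d - i + h).+1 = n - d - i + h.+1)%N) in rec3; last lia.
rewrite (_ : ((n - d - i + h.+1) - (n - d - j) = j + h.+1 - i)%N) in rec3; last lia.
rewrite /term.
transitivity ((q ^ (j * (j + h.+1 - i) + 'C(i - h.+1, 2)))%:R * pow2 (i - h.+1)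
   * (gbin i h.+1 * (pow2 h.+1 - 1)) * (gbin (d - h.+1) j * (pow2 (d - h) - 1))
   * (gbin (n - d - i + h.+1) (n - d - j) * (pow2 (j + h.+1 - i) - 1))); first ring.
by rewrite power rec1 -rec2 rec3; ring.
Qed.

Lemma term_mono n d j i h : (2 * d + 1 <= n)%N -> (i <= d)%N ->
  (i <= j + h)%N -> (h < i)%N -> (h + j < d)%N -> term n d j i h <= term n d j i h.+1.
Proof.
move=> n_ge le_id le_i lt_hi lt_hjd.
have := @term_succ_ratio n d j i h le_i lt_hi lt_hjd ltac:(lia) ltac:(lia).
set D := (pow2 (i - h.+1) * _ * _ * _); set Nm := (pow2 j * _ * _ * _) => ratio.
have D_gt0 : 0 < D by rewrite /D !mulr_gt0 ?pow2_gt0 // pow2B1_gt0 //; lia.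
suff D_le : D <= Nm by rewrite -(ler_pM2r D_gt0) ratio ler_pM2l ?term_gt0.
set c := (i - h.+1)%N; set s := (j + h.+1 - i)%N; set w := (d - h - j)%N.
have pow_j : pow2 j = pow2 s * pow2 c by rewrite -pow2D /s /c; congr (_ ^ _)%:R; lia.
have pow_dh : pow2 (d - h) = pow2 w * pow2 s * pow2 c by rewrite -!pow2D /s /c /w; congr (_ ^ _)%:R; lia.
have pow_ih : pow2 (i - h) = 2 * pow2 c by rewrite -pow2S /c; congr (_ ^ _)%:R; lia.
rewrite /D /Nm pow_j pow_dh pow_ih pow2S.
apply: step_ratio_ineq; rewrite ?pow2_ge1 ?pow2_ge2 //; try by rewrite /s /w; lia.
by rewrite -[2]/(pow2 1) -!pow2D pow2_le //; rewrite /s /w; lia.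
Qed.

Lemma normG_bounds n d j i : (2 * d + 1 <= n)%N -> (i <= d)%N -> (j <= d)%N ->
  `|G n d j i| <= term n d j i (top d j i) /\
  term n d j i (top d j i)
    - (if (i - j < top d j i)%N then term n d j i (top d j i).-1 else 0) <= `|G n d j i|.
Proof.
move=> n_ge le_id le_jd.
have le_lo_top : (i - j <= top d j i)%N by rewrite /top; lia.
have mono h : (i - j <= h < top d j i)%N -> term n d j i h <= term n d j i h.+1.
  by move=> /andP[lo_h h_top]; apply: term_mono => //; rewrite /top in h_top; lia.
have [A_ge0 A_le A_ge] := @alternating_sum_bounds _ (term n d j i) _ _ le_lo_top
  (fun h => ltW (term_gt0 n d j i h)) mono.
rewrite G_alternating.
set A := \sum_(i - j <= h < (top d j i).+1) _ in A_ge0 A_le A_ge.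
have -> : \sum_(i - j <= h < (top d j i).+1) (-1) ^+ (i - h) * term n d j i h
    = (-1) ^+ (i - top d j i) * A.
  rewrite /A big_distrr /=; apply: eq_big_nat => h /andP[_ h_top].
  by rewrite mulrA -exprD; congr ((-1) ^+ _ * _); rewrite /top in h_top *; lia.
by rewrite normrM normr_sign mul1r ger0_norm.
Qed.

(* Case i + j < d: the top summands are the diagonal ones, T_{i+1}(i+1) and T_i(i). *)
Lemma term_diag_succ n d j i : (i + j < d)%N -> (i < n - d)%N ->
  term n d j i.+1 i.+1 * (pow2 (d - i) - 1) = term n d j i i * (pow2 (d - i - j) - 1).
Proof.
move=> lt_ijd lt_i_nd.
have rec := @gbinSl (d - i.+1) j ltac:(lia).
rewrite (_ : ((d - i.+1).+1 = d - i)%N) in rec; last lia.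
rewrite /term !subnn !gbinnn !addnK (_ : (n - d - i.+1 + i.+1 = n - d - i + i)%N); last lia.
transitivity ((q ^ (j * j + 'C(0, 2)))%:R * 1 * (gbin (d - i.+1) j * (pow2 (d - i) - 1))
   * gbin (n - d - i + i) (n - d - j)); first ring.
by rewrite -rec; ring.
Qed.

Lemma term_subdiag n d j h : (1 <= j)%N -> (h.+1 + j < d)%N -> (2 * d + 1 <= n)%N ->
  term n d j h.+1 h * (pow2 j * (2 * pow2 (d - h.+1 - j) - 1) * (pow2 (n - d) - 1))
  = term n d j h.+1 h.+1
    * ((pow2 h.+1 - 1) * (2 * pow2 (d - h.+1 - j) * pow2 j - 1) * (pow2 j - 1)).
Proof.
move=> j_ge1 lt_hjd n_ge.
have := @term_succ_ratio n d j h.+1 h ltac:(lia) (ltnSn h) ltac:(lia) ltac:(lia) ltac:(lia).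
rewrite subnn (_ : (j + h.+1 - h.+1 = j)%N); last lia.
rewrite (_ : (h.+1 - h = 1)%N); last lia.
rewrite (_ : (n - d - h.+1 + h.+1 = n - d)%N); last lia.
have pow_dh : pow2 (d - h) = 2 * pow2 (d - h.+1 - j) * pow2 j.
  by rewrite -pow2S -pow2D; congr (_ ^ _)%:R; lia.
have pow_dhj : pow2 (d - h - j) = 2 * pow2 (d - h.+1 - j) by rewrite -pow2S; congr (_ ^ _)%:R; lia.
rewrite pow_dh pow_dhj => ratio.
by symmetry; apply: eq_trans (eq_trans ratio _); rewrite ?pow2_0 ?pow2_1; ring.
Qed.

(* Case i + j >= d: the top summands are T_{i+1}(d-j) and T_i(d-j). *)
Lemma term_top_succ n d j i : (d <= i + j)%N -> (i < d)%N -> (j <= d)%N -> (2 * d + 1 <= n)%N ->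
  term n d j i.+1 (d - j)
    * (pow2 (i + j - d) * pow2 (d - i) * (2 * pow2 (i + j - d) - 1) * (pow2 (n - i - j) - 1))
  = term n d j i (d - j)
    * (pow2 (i + j - d) * (2 * pow2 (i + j - d) * pow2 (d - j) - 1) * (pow2 (d - i) - 1)).
Proof.
move=> le_dij lt_id le_jd n_ge.
set m := (i + j - d)%N.
have power : (q ^ (j * (j + (d - j) - i.+1) + 'C(i.+1 - (d - j), 2)))%:R * pow2 j
           = (q ^ (j * (j + (d - j) - i) + 'C(i - (d - j), 2)))%:R * pow2 m.
  rewrite -!natrM -!expnD; congr (_ ^ _)%:R.
  set u := (d - i.+1)%N.
  rewrite (_ : (j + (d - j) - i.+1 = u)%N); last by rewrite /u; lia.
  rewrite (_ : (j + (d - j) - i = u.+1)%N); last by rewrite /u; lia.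
  rewrite (_ : (i.+1 - (d - j) = m.+1)%N); last by rewrite /m; lia.
  rewrite (_ : (i - (d - j) = m)%N); last by rewrite /m; lia.
  by rewrite binS bin1 mulnS; ring.
have rec1 := @gbinSl i (d - j) ltac:(lia).
rewrite (_ : (i.+1 - (d - j) = m.+1)%N) in rec1; last by rewrite /m; lia.
have rec3 := @gbinSl (n - d - i.+1 + (d - j)) (n - d - j) ltac:(lia).
rewrite (_ : ((n - d - i.+1 + (d - j)).+1 = n - d - i + (d - j))%N) in rec3; last lia.
rewrite (_ : ((n - d - i + (d - j)) - (n - d - j) = d - i)%N) in rec3; last lia.
have ratio : term n d j i.+1 (d - j)
      * (pow2 j * (pow2 m.+1 - 1) * (pow2 (n - d - i + (d - j)) - 1))
    = term n d j i (d - j) * (pow2 m * (pow2 i.+1 - 1) * (pow2 (d - i) - 1)).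
  rewrite /term.
  transitivity ((q ^ (j * (j + (d - j) - i.+1) + 'C(i.+1 - (d - j), 2)))%:R * pow2 j
     * (gbin i.+1 (d - j) * (pow2 m.+1 - 1)) * gbin (d - (d - j)) j
     * (gbin (n - d - i.+1 + (d - j)) (n - d - j) * (pow2 (n - d - i + (d - j)) - 1)));
    first ring.
  by rewrite power rec1 -rec3; ring.
have pow_j : pow2 j = pow2 m * pow2 (d - i) by rewrite -pow2D /m; congr (_ ^ _)%:R; lia.
have pow_i : pow2 i.+1 = 2 * pow2 m * pow2 (d - j).
  by rewrite -pow2S -pow2D /m; congr (_ ^ _)%:R; lia.
rewrite pow_j pow_i pow2S (_ : (n - d - i + (d - j) = n - i - j)%N) in ratio; last lia.
by apply: eq_trans (eq_trans ratio _); ring.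
Qed.

Lemma term_below_top n d j i p : (d <= i + j)%N -> (i < d)%N -> (d - j = p.+1)%N ->
  (2 * d + 1 <= n)%N ->
  term n d j i p
    * (pow2 (i + j - d) * pow2 (d - i) * (2 * pow2 (i + j - d) - 1) * (pow2 (n - i - j) - 1))
  = term n d j i (d - j) * (pow2 (i + j - d) * (pow2 (d - j) - 1)
      * (2 * pow2 (i + j - d) * pow2 (d - i) - 1) * (pow2 (d - i) - 1)).
Proof.
move=> le_dij lt_id djp n_ge.
have := @term_succ_ratio n d j i p ltac:(lia) ltac:(lia) ltac:(lia) ltac:(lia) ltac:(lia).
rewrite -djp.
set m := (i + j - d)%N.
have pow_j : pow2 j = pow2 m * pow2 (d - i) by rewrite -pow2D /m; congr (_ ^ _)%:R; lia.
have pow_ip : pow2 (i - p) = 2 * pow2 m by rewrite -pow2S /m; congr (_ ^ _)%:R; lia.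
have pow_dp : pow2 (d - p) = 2 * pow2 m * pow2 (d - i).
  by rewrite -pow2S -pow2D /m; congr (_ ^ _)%:R; lia.
rewrite (_ : (i - (d - j) = m)%N); last by rewrite /m; lia.
rewrite (_ : (j + (d - j) - i = d - i)%N); last lia.
rewrite (_ : (d - p - j = 1)%N); last lia.
rewrite (_ : (n - d - i + (d - j) = n - i - j)%N); last lia.
rewrite pow_j pow_ip pow_dp => ratio.
by symmetry; apply: eq_trans (eq_trans ratio _); rewrite ?pow2_0 ?pow2_1; ring.
Qed.

Lemma diag_succ_lt_half n d j i : (1 <= j)%N -> (i + j < d)%N -> (2 * d + 1 <= n)%N ->
  2 * term n d j i.+1 i.+1 < term n d j i i.
Proof.
move=> j_ge1 lt_ijd n_ge.
set A := pow2 (d - i - j); set J := pow2 j.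
have A_ge2 : 2 <= A by apply: pow2_ge2; lia.
have J_ge2 : 2 <= J by exact: pow2_ge2.
have pow_di : pow2 (d - i) = A * J by rewrite -pow2D; congr (_ ^ _)%:R; lia.
apply: (@lt_of_ratio _ _ _ (A * J - 1) (2 * (A - 1))).
- exact: term_gt0.
- by nra.
- rewrite -mulrA -pow_di (@term_diag_succ n d j i lt_ijd); last lia.
  by rewrite mulrCA.
- exact: top_ratio_lt_half.
Qed.

Lemma subdiag_le_half n d j h : (1 <= j)%N -> (h.+1 + j < d)%N -> (2 * d + 1 <= n)%N ->
  2 * term n d j h.+1 h <= term n d j h.+1 h.+1.
Proof.
move=> j_ge1 lt_hjd n_ge.
set A := pow2 (d - h.+1 - j); set J := pow2 j; set I := pow2 h.+1; set N := pow2 (n - d).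
have A_ge2 : 2 <= A by apply: pow2_ge2; lia.
have N_ge : 2 * I * J * A <= N by rewrite -pow2_1 -!pow2D pow2_le //; lia.
apply: (@le_of_ratio _ _ _ (J * (2 * A - 1) * (N - 1))
          (2 * ((I - 1) * (2 * A * J - 1) * (J - 1)))).
- exact/ltW/term_gt0.
- by rewrite !mulr_gt0 ?pow2B1_gt0 ?pow2_gt0 //; [lra | lia].
- transitivity (2 * (term n d j h.+1 h * (J * (2 * A - 1) * (N - 1)))); first ring.
  by rewrite /A /J /N /I term_subdiag //; ring.
- by apply: below_ratio_le_half => //; rewrite ?pow2_ge1 ?pow2_ge2.
Qed.

Lemma decrease_small_i n d j i : (2 * d + 1 <= n)%N -> (1 <= j)%N -> (i + j < d)%N ->
  term n d j i.+1 i.+1 + (if (0 < i)%N then term n d j i i.-1 else 0) < term n d j i i.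
Proof.
move=> n_ge j_ge1 lt_ijd.
have top_lt := @diag_succ_lt_half n d j i j_ge1 lt_ijd n_ge.
case: i lt_ijd top_lt => [|h] lt_hjd top_lt /=.
  by have := term_gt0 n d j 1 1; rewrite addr0; lra.
by have := @subdiag_le_half n d j h j_ge1 lt_hjd n_ge; lra.
Qed.

(* Case i + j >= d of step 3: T_{i+1}(d-j) + T_i(d-j-1) < T_i(d-j), the second
   term being absent when j = d.  The two multipliers add up to less than 1. *)
Lemma decrease_large_i n d j i : (2 * d + 1 <= n)%N -> (d <= i + j)%N -> (i < d)%N ->
  (j <= d)%N ->
  term n d j i.+1 (d - j) + (if (0 < d - j)%N then term n d j i (d - j).-1 else 0)
  < term n d j i (d - j).
Proof.
move=> n_ge le_dij lt_id le_jd.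
set X := term n d j i (d - j); have X_gt0 : 0 < X := term_gt0 _ _ _ _ _.
set M := pow2 (i + j - d); set P := pow2 (d - j); set S := pow2 (d - i).
set N := pow2 (n - i - j).
have M_ge1 : 1 <= M := pow2_ge1 _.
have S_ge2 : 2 <= S by apply: pow2_ge2; lia.
have N_ge : 2 * P * S <= N by rewrite /P /S /N -pow2_1 -!pow2D pow2_le //; lia.
set D := M * S * (2 * M - 1) * (N - 1).
have D_gt0 : 0 < D by rewrite /D !mulr_gt0 ?pow2_gt0 ?pow2B1_gt0 //; lia || lra.
set b := M * (P - 1) * (2 * M * S - 1) * (S - 1).
have below_ratio : (if (0 < d - j)%N then term n d j i (d - j).-1 else 0) * D = X * b.
  case: (posnP (d - j)) => [dj0 | dj_gt0] /=.
    by rewrite /b /P dj0 pow2_0 subrr mulr0 !mul0r mulr0.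
  by rewrite /D /X /b /M /S /N /P (@term_below_top n d j i (d - j).-1) ?prednK.
apply: (@lt_of_ratio _ _ _ D (M * (2 * M * P - 1) * (S - 1) + b)) => //.
  rewrite mulrDl below_ratio mulrDr; congr (_ + _).
  by rewrite /D /X /M /S /N /P term_top_succ.
rewrite /b /D -!mulrA -mulrDr ltr_pM2l; last lra.
have := @ratio_sum_lt_one _ M P S N M_ge1 (pow2_ge1 _) S_ge2 N_ge.
by rewrite !mulrA.
Qed.

Theorem theorem3p7 (n d : nat) :
  (1 <= d)%N -> (2 * d + 1 <= n)%N ->
  forall i j : nat, (i <= d - 1)%N -> (1 <= j <= d)%N ->
    `|G n d j i.+1| < `|G n d j i|.
Proof.
move=> d_ge1 n_ge i j le_i /andP[j_ge1 le_jd].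
have [upper _] := @normG_bounds n d j i.+1 n_ge ltac:(lia) le_jd.
have [_ lower] := @normG_bounds n d j i n_ge ltac:(lia) le_jd.
apply: le_lt_trans upper (lt_le_trans _ lower); rewrite ltrBrDr /top.
case: (ltnP (i + j) d) => [lt_ijd | le_dij].
- rewrite (_ : minn i.+1 (d - j) = i.+1); last lia.
  rewrite (_ : minn i (d - j) = i); last lia.
  rewrite (_ : (i - j < i)%N = (0 < i)%N); last lia.
  exact: decrease_small_i.
- rewrite (_ : minn i.+1 (d - j) = d - j)%N; last lia.
  rewrite (_ : minn i (d - j) = d - j)%N; last lia.
  rewrite (_ : (i - j < d - j)%N = (0 < d - j)%N); last lia.
  by apply: decrease_large_i; lia.
Qed.
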